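(* Fix a prime power $q$ and $u\ge1$. Let $(C_i)_{i\ge1}$ be a family of linear $[n_i,k_i,d_i]$ codes over $\mathbb{F}_{q^u}$ with $n_i\to\infty$, $(k_i)$ nondecreasing, $\liminf_{i\to\infty}k_i/n_i\ge\alpha$ and $\liminf_{i\to\infty}d_i/n_i\ge\beta$ for some constants $0<\alpha,\beta<1$, and suppose there is a constant $W$ with $n_i\le Wn_{i-1}$ for all $i\ge2$. Then for every constant $c>0$ there are constants $R_1,A,B>0$ and $p_0\in(0,1)$ (depending only on $q,u$, the family, and $c$) such that the following holds. For every $n\ge2$ and every $[n,k]$ linear code $C\subseteq\mathbb{F}_q^n$ with $k<n$ and parity-check matrix $H\in\mathbb{F}_q^{(n-k)\times n}$ of rank $n-k$, there is an index $i$ with $k_i\ge n-k$ and $n_i\le A n$ such that, letting $\bar G'_i$ be the $(n-k)\times n_i$ matrix formed by any $n-k$ rows of a generator matrix of $C_i$, the list $S$ of rows of $\bar G_i'^{\,T}H$ is a test set for $C$ with designed probability $p_0$, and Algorithm DetermineCodeword run with this $S$ and $R=\lceil R_1\log n\rceil$ rounds: performs at most $B\,u\,n\log n$ operations in $\mathbb{F}_q$; uses storage of at most $B\,u\,n^2$ elements of $\mathbb{F}_q$ for $S$; always returns True when $\mathbf{x}\in C$; and returns True with probability at most $n^{-c}$ when $\mathbf{x}\notin C$.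
   Context: $\mathbb{F}_{q^u}$ is the degree-$u$ extension of $\mathbb{F}_q$, whose elements are represented as vectors of length $u$ over $\mathbb{F}_q$; $(\mathbf{x},\mathbf{y})=\sum_{j=1}^n x_jy_j$. A test set with designed probability $p\in(0,1)$ for $C$ is a finite nonempty collection $S$ of vectors in $\mathbb{F}_{q^u}^n$ (counted with multiplicity) such that for every $\mathbf{x}\in\mathbb{F}_q^n$: (1) $\mathbf{x}\in C$ iff $(\mathbf{x},\mathbf{y})=0$ for all $\mathbf{y}\in S$; (2) if some $\mathbf{y}\in S$ has $(\mathbf{x},\mathbf{y})\ne0$, then $\#\{\mathbf{y}\in S:(\mathbf{x},\mathbf{y})\ne0\}\ge(1-p)\#S$. Algorithm DetermineCodeword (with $R$ rounds, test set $S$ precomputed) on input $\mathbf{x}\in\mathbb{F}_q^n$: for $i=1,\dots,R$, choose $\mathbf{y}\in S$ uniformly at random, independently of previous rounds, and compute $z=(\mathbf{x},\mathbf{y})$; if $z\ne0$, return False. If all rounds give $z=0$, return True. *)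

From HB Require Import structures.
From mathcomp Require Import all_boot all_order all_algebra.
From mathcomp Require Import boolp classical_sets reals constructive_ereal ereal.
From mathcomp Require Import topology normedtype sequences exp.
Set Implicit Arguments. Unset Strict Implicit. Unset Printing Implicit Defensive.
Import Order.TTheory GRing.Theory Num.Theory.
Local Open Scope ring_scope.

Definition wt (K : nzRingType) (m : nat) (v : 'rV[K]_m) : nat :=
  #|[set j : 'I_m | v 0 j != 0]|.

Definition is_min_distance (K : fieldType) (k m : nat) (G : 'M[K]_(k, m)) (d : nat) : Prop :=
  (exists c : 'rV[K]_m, [/\ (c <= G)%MS, c != 0 & wt c = d]) /\
  (forall c : 'rV[K]_m, (c <= G)%MS -> c != 0 -> (d <= wt c)%N).

Section TestSets.
Variables (F L : finFieldType) (emb : {rmorphism F -> L}).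

Definition dotFL (m : nat) (x : 'rV[F]_m) (y : 'rV[L]_m) : L :=
  \sum_(j < m) emb (x 0 j) * y 0 j.

(* Test set for the code C (row space of C) with designed probability p;
   S is a list, i.e. counted with multiplicity. *)
Definition is_test_set (R : realType) (k m : nat) (C : 'M[F]_(k, m))
    (S : seq 'rV[L]_m) (p : R) : Prop :=
  (0 < size S)%N /\
  forall x : 'rV[F]_m,
    ((x <= C)%MS <-> all (fun y => dotFL x y == 0) S) /\
    (has (fun y => dotFL x y != 0) S ->
       (1 - p) * (size S)%:R <= (count (fun y => dotFL x y != 0) S)%:R).

(* Algorithm DetermineCodeword, run on the sequence ys of vectors drawn in
   the successive rounds. *)
Fixpoint dc_run (m : nat) (x : 'rV[F]_m) (ys : seq 'rV[L]_m) : bool :=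
  match ys with
  | [::] => true
  | y :: ys' => if dotFL x y != 0 then false else dc_run x ys'
  end.

(* Cost model: an element of F_{q^u} is a vector of u elements of F_q.
   Computing (x,y) for x in F_q^m, y in F_{q^u}^m takes u*m multiplications
   in F_q, u*(m-1) additions, and the test z != 0 takes u comparisons. *)
Definition round_cost (u m : nat) : nat := (u * m + u * (m - 1) + u)%N.

Fixpoint dc_cost (u m : nat) (x : 'rV[F]_m) (ys : seq 'rV[L]_m) : nat :=
  match ys with
  | [::] => 0%N
  | y :: ys' => addn (round_cost u m) (if dotFL x y != 0 then 0%N else dc_cost u x ys')
  end.

Definition chosen (m : nat) (S : seq 'rV[L]_m) (Rn : nat)
    (ch : {ffun 'I_Rn -> 'I_(size S)}) : seq 'rV[L]_m :=
  [seq nth 0 S (ch r) | r <- enum 'I_Rn].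

(* Probability that DetermineCodeword returns True: the Rn indices are
   independent and uniform in 'I_(size S). *)
Definition prob_true (R : realType) (m : nat) (S : seq 'rV[L]_m) (Rn : nat)
    (x : 'rV[F]_m) : R :=
  (#|[set ch : {ffun 'I_Rn -> 'I_(size S)} | dc_run x (chosen ch)]|)%:R
    / ((size S) ^ Rn)%:R.

(* Storage of S, in elements of F_q (each entry of F_{q^u} is u elements). *)
Definition storage (u m : nat) (S : seq 'rV[L]_m) : nat := (size S * m * u)%N.

Definition rows_of (r m : nat) (M : 'M[L]_(r, m)) : seq 'rV[L]_m :=
  [seq row j M | j <- enum 'I_r].

Definition S_of (r ni m : nat) (Gsel : 'M[L]_(r, ni)) (H : 'M[F]_(r, m)) :
    seq 'rV[L]_m :=
  rows_of (Gsel^T *m map_mx emb H).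

End TestSets.

(* For x in F_q^n, the test (x, y_j) given by the j-th row of G'^T H is the
   j-th coordinate of the codeword (H x^T)^T G' of C_i whose message is the
   syndrome of x.  As G' has full row rank, this codeword vanishes iff x is in
   C; otherwise it is a nonzero codeword of C_i, so at least d_i >= beta n_i / 2
   of the n_i tests fail.  Thus S is a test set with p0 = 1 - beta / 2, and
   R >= c ln n / (- ln p0) independent rounds all pass with probability at most
   p0^R <= n^-c.  Taking for i the first index (beyond the point where the
   liminf bounds hold) with k_i >= n, the growth condition n_i <= W n_(i-1)
   forces n_i = O(n), which bounds the cost and the storage. *)

From HB Require Import structures.
From mathcomp Require Import all_boot all_order all_algebra.
From mathcomp Require Import boolp classical_sets reals constructive_ereal ereal.
From mathcomp Require Import topology normedtype sequences exp.
From mathcomp Require Import ring lra.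
Set Implicit Arguments. Unset Strict Implicit. Unset Printing Implicit Defensive.
Import Order.TTheory GRing.Theory Num.Theory.
Local Open Scope ring_scope.

Lemma count_card_nth (T : Type) (x0 : T) (p : pred T) (s : seq T) :
  count p s = #|[set j : 'I_(size s) | p (nth x0 s j)]|.
Proof.
rewrite -sum1_count -[in LHS](mkseq_nth x0 s) /mkseq big_map.
have -> : iota 0 (size s) = index_iota 0 (size s) by rewrite /index_iota subn0.
by rewrite big_mkord -sum1_card; apply: eq_bigl => j; rewrite inE.
Qed.

Lemma row_free_rowsub (K : fieldType) (p q m : nat) (f : 'I_p -> 'I_q)
    (G : 'M[K]_(q, m)) :
  injective f -> row_free G -> row_free (rowsub f G).
Proof.
move=> injf frG; apply: inj_row_free => v.
rewrite rowsubE mulmxA => /eqP; rewrite mulmx_free_eq0 // => /eqP vf0.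
apply/rowP => a; have := congr1 (fun M : 'rV[K]_q => M 0 (f a)) vf0.
rewrite !mxE (bigD1 a) //= big1 ?addr0 => [|b nba].
  by rewrite !mxE eqxx mulr1.
by rewrite !mxE (inj_eq injf) (negbTE nba) mulr0.
Qed.

Section DetermineCodeword.
Variables (F L : finFieldType) (emb : {rmorphism F -> L}).

Lemma dc_runE m (x : 'rV[F]_m) ys :
  dc_run emb x ys = all (fun y => dotFL emb x y == 0) ys.
Proof. by elim: ys => //= y ys ->; case: eqP. Qed.

Lemma dc_cost_le u m (x : 'rV[F]_m) ys :
  (dc_cost emb u x ys <= size ys * round_cost u m)%N.
Proof. by elim: ys => //= y ys IH; rewrite mulSn leq_add2l; case: ifP. Qed.

Lemma round_cost_le u m : (0 < m)%N -> (round_cost u m <= 3 * (u * m))%N.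
Proof.
move=> m_gt0; rewrite /round_cost !mulSn mul0n addn0 addnA.
by rewrite !leq_add // ?leq_mul2l ?leq_subr ?orbT // leq_pmulr.
Qed.

Lemma dc_cost_chosen_le u m (x : 'rV[F]_m) S Rn (ch : {ffun 'I_Rn -> 'I_(size S)}) :
  (0 < m)%N -> (dc_cost emb u x (chosen ch) <= Rn * (3 * (u * m)))%N.
Proof.
move=> m_gt0; apply: leq_trans (dc_cost_le u x (chosen ch)) _.
by rewrite /chosen size_map size_enum_ord leq_mul2l round_cost_le ?orbT.
Qed.

Lemma dc_cost_chosen_ler (R : realType) u m (x : 'rV[F]_m) S Rn
    (ch : {ffun 'I_Rn -> 'I_(size S)}) (K B : R) :
  (0 < m)%N -> Rn%:R <= K * ln m%:R -> 3 * K <= B ->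
  (dc_cost emb u x (chosen ch))%:R <= B * u%:R * m%:R * ln m%:R.
Proof.
move=> m_gt0 Rn_le K_le; have lnm_ge0 : 0 <= ln (m%:R : R) by rewrite ln_ge0 // ler1n.
apply: le_trans (_ : ((Rn * (3 * (u * m)))%:R : R) <= _).
  by rewrite ler_nat dc_cost_chosen_le.
rewrite !natrM; apply: le_trans (ler_wpM2r _ Rn_le) _; first by rewrite !mulr_ge0.
have -> : K * ln m%:R * (3 * (u%:R * m%:R)) = 3 * K * (u%:R * m%:R * ln m%:R) by ring.
have -> : B * u%:R * m%:R * ln m%:R = B * (u%:R * m%:R * ln m%:R) by ring.
by rewrite ler_wpM2r ?mulr_ge0.
Qed.

Lemma dc_run_chosen_all m (x : 'rV[F]_m) S Rn (ch : {ffun 'I_Rn -> 'I_(size S)}) :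
  all (fun y => dotFL emb x y == 0) S -> dc_run emb x (chosen ch).
Proof.
move=> /allP S0; rewrite dc_runE /chosen all_map; apply/allP => r _ /=.
by apply: S0; apply: mem_nth.
Qed.

(* A run returns True iff every drawn index lies in the set of zero tests, so
   the favourable draws are the functions 'I_Rn -> (that set). *)
Lemma prob_true_le (R : realType) m (S : seq 'rV[L]_m) Rn x (p : R) :
  (0 < size S)%N -> 0 <= p ->
  (count (fun y => dotFL emb x y == 0) S)%:R <= p * (size S)%:R ->
  prob_true emb R S Rn x <= p ^+ Rn.
Proof.
move=> S_gt0 p_ge0 hcount.
set Z := [set j : 'I_(size S) | dotFL emb x (nth 0 S j) == 0].
have cardZ : #|Z| = count (fun y => dotFL emb x y == 0) S.
  by rewrite (count_card_nth (0 : 'rV[L]_m)).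
have card_true : #|[set ch : {ffun 'I_Rn -> 'I_(size S)} | dc_run emb x (chosen ch)]|
                 = (#|Z| ^ Rn)%N.
  rewrite -[in RHS](card_ord Rn) -card_ffun_on; apply: eq_card => ch.
  rewrite inE dc_runE /chosen all_map; apply/allP/ffun_onP => [h r|h r _ /=].
    by have := h r (mem_enum _ r); rewrite /= inE.
  by have := h r; rewrite inE.
rewrite /prob_true card_true cardZ !natrX -expr_div_n.
have S_gt0R : (0 : R) < (size S)%:R by rewrite ltr0n.
apply: lerXn2r; rewrite ?qualifE //= ?divr_ge0 //.
by rewrite ler_pdivrMr.
Qed.

Lemma prob_true_test_set_le (R : realType) k m (C : 'M[F]_(k, m)) S (p : R) Rn x :
  is_test_set emb C S p -> 0 <= p -> ~~ (x <= C)%MS ->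
  prob_true emb R S Rn x <= p ^+ Rn.
Proof.
move=> [S_gt0 hS] p_ge0 xNC; have [xC_all hcount] := hS x.
have has_nz : has (fun y => dotFL emb x y != 0) S.
  apply/hasP; apply: contraNP xNC => nz; apply/xC_all/allP => y yS.
  by apply/negPn/negP => y_nz; apply: nz; exists y.
apply: prob_true_le => //.
have := count_predC (fun y => dotFL emb x y == 0) S.
move/(congr1 (fun m => (m%:R : R))); rewrite natrD => split_count.
have := hcount has_nz; rewrite -split_count; lra.
Qed.

Lemma dc_run_test_set (R : realType) k m (C : 'M[F]_(k, m)) S (p : R) x Rn
    (ch : {ffun 'I_Rn -> 'I_(size S)}) :
  is_test_set emb C S p -> (x <= C)%MS -> dc_run emb x (chosen ch).
Proof. by move=> [_ hS] xC; apply/dc_run_chosen_all/(hS x).1. Qed.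

End DetermineCodeword.

Section SyndromeTestSet.
Variables (F L : finFieldType) (emb : {rmorphism F -> L}).
Variables (r m n : nat) (G' : 'M[L]_(r, m)) (H : 'M[F]_(r, n)).

Definition syndrome_codeword (x : 'rV[F]_n) : 'rV[L]_m :=
  (map_mx emb (H *m x^T))^T *m G'.

Lemma dotFL_S_of_row (x : 'rV[F]_n) j :
  dotFL emb x (row j (G'^T *m map_mx emb H)) = syndrome_codeword x 0 j.
Proof.
rewrite /dotFL /syndrome_codeword !mxE.
under eq_bigr => l _ do rewrite !mxE big_distrr /=.
rewrite exchange_big /=; apply: eq_bigr => a _.
rewrite !mxE rmorph_sum big_distrl /=; apply: eq_bigr => l _.
by rewrite !mxE rmorphM /=; ring.
Qed.

Lemma size_S_of : size (S_of emb G' H) = m.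
Proof. by rewrite size_map size_enum_ord. Qed.

Lemma storage_S_of_le (R : realType) u (B : R) : m%:R <= B * n%:R ->
  (storage u (S_of emb G' H))%:R <= B * u%:R * n%:R ^+ 2.
Proof.
move=> m_le; have -> : B * u%:R * n%:R ^+ 2 = B * n%:R * n%:R * u%:R by ring.
by rewrite /storage size_S_of !natrM !ler_wpM2r.
Qed.

Lemma count_S_of_neq0 (x : 'rV[F]_n) :
  count (fun y => dotFL emb x y != 0) (S_of emb G' H) = wt (syndrome_codeword x).
Proof.
rewrite /S_of /rows_of count_map /wt -sum1_count big_enum_cond -sum1_card.
by apply: eq_bigl => j; rewrite !inE /= dotFL_S_of_row.
Qed.

Hypothesis G'_free : row_free G'.

Lemma syndrome_codeword_eq0 (x : 'rV[F]_n) :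
  (syndrome_codeword x == 0) = (H *m x^T == 0).
Proof. by rewrite mulmx_free_eq0 // trmx_eq0 map_mx_eq0. Qed.

Lemma all_S_of_eq0 (x : 'rV[F]_n) :
  all (fun y => dotFL emb x y == 0) (S_of emb G' H) = (H *m x^T == 0).
Proof.
rewrite /S_of /rows_of all_map -syndrome_codeword_eq0.
apply/allP/eqP => [S0|sc0 j _] /=; last by rewrite dotFL_S_of_row sc0 mxE.
by apply/rowP => j; apply/eqP; rewrite -dotFL_S_of_row mxE; apply: S0; rewrite mem_enum.
Qed.

Lemma S_of_count_neq0_ge k (Gi : 'M[L]_(k, m)) d (x : 'rV[F]_n) :
  (G' <= Gi)%MS -> is_min_distance Gi d -> H *m x^T != 0 ->
  (d <= count (fun y => dotFL emb x y != 0%R) (S_of emb G' H))%N.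
Proof.
move=> G'_sub [_ d_min] Hx_neq0; rewrite count_S_of_neq0; apply: d_min.
  exact: submx_trans (submxMl _ _) G'_sub.
by rewrite syndrome_codeword_eq0.
Qed.

Lemma S_of_test_set (R : realType) c (C : 'M[F]_(c, n)) k (Gi : 'M[L]_(k, m)) d (p : R) :
  (0 < m)%N -> (G' <= Gi)%MS -> is_min_distance Gi d ->
  (forall x : 'rV[F]_n, (x <= C)%MS <-> H *m x^T == 0) ->
  (1 - p) * m%:R <= d%:R -> is_test_set emb C (S_of emb G' H) p.
Proof.
move=> m_gt0 G'_sub Gi_d C_ker hp.
split=> [|x]; first by rewrite size_S_of.
split; first by rewrite all_S_of_eq0.
move=> has_nz; rewrite size_S_of (le_trans hp) // ler_nat.
apply: S_of_count_neq0_ge Gi_d _ => //; rewrite -all_S_of_eq0.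
by apply: contraL has_nz => /allP S0; apply/hasPn => y /S0 ->.
Qed.

End SyndromeTestSet.

Lemma limn_einf_gt_eventually (R : realType) (v : nat -> R) (a b : R) :
  (a%:E <= limn_einf (fun i => (v i)%:E))%E -> b < a ->
  exists N, forall i, (N <= i)%N -> b <= v i.
Proof.
move=> a_le b_lt_a.
have : (b%:E < ereal_sup (range (einfs (fun i => (v i)%:E))))%E.
  have := @cvg_einfs_sup R (fun i => (v i)%:E).
  move/(cvg_lim _) => <- //; rewrite -limn_einf_lim.
  by apply: lt_le_trans a_le; rewrite lte_fin.
move=> /ereal_sup_gt[_ [N _ <-]] b_lt; exists N => i Ni.
rewrite -lee_fin; apply: (ltW (lt_le_trans b_lt _)).
by apply: ereal_inf_lbound; exists i.
Qed.

Lemma limn_einf_ratio_eventually (R : realType) (x y : nat -> nat) (a : R) :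
  0 < a -> (a%:E <= limn_einf (fun i => ((x i)%:R / (y i)%:R : R)%:E))%E ->
  exists N, forall i, (N <= i)%N -> a / 2 * (y i)%:R <= (x i)%:R.
Proof.
move=> a_gt0 a_le.
have [|N hN] := limn_einf_gt_eventually a_le (_ : a / 2 < a); first lra.
exists N => i /hN; have [->|y_neq0] := eqVneq (y i) 0%N; first by rewrite mulr0.
by rewrite ler_pdivlMr // ltr0n lt0n.
Qed.

Lemma code_family_eventually (R : realType) (nf kf df : nat -> nat) (alpha beta : R) :
  0 < alpha -> 0 < beta ->
  (forall M, exists N, forall i, (N <= i)%N -> (M <= nf i)%N) ->
  (alpha%:E <= limn_einf (fun i => ((kf i)%:R / (nf i)%:R : R)%:E))%E ->
  (beta%:E <= limn_einf (fun i => ((df i)%:R / (nf i)%:R : R)%:E))%E ->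
  exists N0, forall i, (N0 <= i)%N -> [/\ (0 < nf i)%N,
    alpha / 2 * (nf i)%:R <= (kf i)%:R & beta / 2 * (nf i)%:R <= (df i)%:R].
Proof.
move=> alpha_gt0 beta_gt0 nf_unbounded rate_ge dist_ge.
have [N1 kf_ge] := limn_einf_ratio_eventually alpha_gt0 rate_ge.
have [N2 df_ge] := limn_einf_ratio_eventually beta_gt0 dist_ge.
have [N3 nf_gt0] := nf_unbounded 1%N.
exists (maxn N1 (maxn N2 N3)) => i; rewrite !geq_max.
by case/and3P => /kf_ge ? /df_ge ? /nf_gt0.
Qed.

Lemma ceil_ge0_bounds (R : realType) (y : R) : 0 <= y ->
  y <= (absz (Num.ceil y))%:R <= y + 1.
Proof.
move=> y_ge0; have -> : ((absz (Num.ceil y))%:R : R) = (Num.ceil y)%:~R.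
  by rewrite natr_absz ger0_norm // ceil_ge0; lra.
by rewrite ceil_ge /=; have := ceilB1_lt y; rewrite intrD; lra.
Qed.

Lemma ceil_mul_ln_le (R : realType) (a : R) (n : nat) : 0 <= a -> (2 <= n)%N ->
  (absz (Num.ceil (a * ln n%:R)))%:R <= (a + (ln (2 : R))^-1) * ln n%:R.
Proof.
move=> a_ge0 n_ge2.
have ln2_gt0 : 0 < ln (2 : R) by apply: ln_gt0; lra.
have ln2_le : ln (2 : R) <= ln n%:R by rewrite ler_ln ?posrE ?ler_nat ?ltr0n // ltnW.
have lnn_ge1 : 1 <= ln (n%:R : R) / ln 2 by rewrite ler_pdivlMr // mul1r.
have /andP[_ ceil_le] := ceil_ge0_bounds (mulr_ge0 a_ge0 (le_trans (ltW ln2_gt0) ln2_le)).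
by apply: le_trans ceil_le _; rewrite mulrDl lerD2l mulrC.
Qed.

Lemma expr_le_powRN (R : realType) (p x c : R) (r : nat) : 0 < p < 1 -> 0 < x ->
  c / - ln p * ln x <= r%:R -> p ^+ r <= x `^ (- c).
Proof.
move=> /andP[p_gt0 p_lt1] x_gt0 hr.
have lnp_neq0 : ln p != 0 by rewrite lt_eqF // ln_lt0 // p_gt0.
have p_range : 0 < p <= 1 by rewrite p_gt0 ltW.
rewrite -powR_mulrn ?(ltW p_gt0) //; apply: le_trans (ger_powR p_range hr) _.
rewrite /powR !gt_eqF //.
by have -> : c / - ln p * ln x * ln p = - c * ln x by field.
Qed.

Section CodeIndex.
Variables (R : realType) (nf kf : nat -> nat) (a W : R) (N0 : nat).
Hypotheses (a_gt0 : 0 < a)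
  (nf_unbounded : forall M, exists N, forall i, (N <= i)%N -> (M <= nf i)%N)
  (kf_ge : forall i, (N0 <= i)%N -> a * (nf i)%:R <= (kf i)%:R)
  (nf_growth : forall i, (nf i.+1)%:R <= W * (nf i)%:R).

Lemma exists_kf_ge n : exists i, (N0 <= i)%N && (n <= kf i)%N.
Proof.
have [M n_lt_M] : exists M : nat, n%:R / a < M%:R.
  by eexists; apply: archi_boundP; rewrite divr_ge0 ?ler0n // ltW.
have [N hN] := nf_unbounded M; exists (maxn N0 N); rewrite leq_maxl /=.
have M_le : M%:R <= (nf (maxn N0 N))%:R :> R by rewrite ler_nat hN ?leq_maxr.
rewrite -(ler_nat R); apply: le_trans (kf_ge (leq_maxl _ _)).
have := lt_le_trans n_lt_M M_le; rewrite ltr_pdivrMr // mulrC; exact: ltW.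
Qed.

(* Take the first admissible index: either it is N0, or its predecessor was
   too short, so the growth condition bounds its length. *)
Lemma code_index n : (0 < n)%N -> exists i,
  [/\ (N0 <= i)%N, (n <= kf i)%N & (nf i)%:R <= ((nf N0)%:R + `|W| / a + 1) * n%:R].
Proof.
move=> n_gt0; have [i /andP[N0_le n_le] i_min] := ex_minnP (exists_kf_ge n).
exists i; split=> //.
have n_ge1 : 1 <= n%:R :> R by rewrite ler1n.
have Wa_ge0 : 0 <= `|W| / a by rewrite divr_ge0 // ltW.
have nfN0_ge0 : 0 <= (nf N0)%:R :> R by [].
case: (ltngtP N0 i) N0_le i_min => [|//|<- _ _]; last by nra.
case: i {n_le} => // j; rewrite ltnS => N0_le_j _ j_min.
have kfj_lt : (kf j < n)%N.
  rewrite ltnNge; apply/negP => le_n.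
  by have := j_min j; rewrite N0_le_j le_n ltnn => /(_ isT).
have nfj_le : (nf j)%:R <= n%:R / a.
  by rewrite ler_pdivlMr // mulrC; apply: le_trans (kf_ge N0_le_j) _; rewrite ler_nat ltnW.
have : (nf j.+1)%:R <= `|W| * (n%:R / a).
  apply: le_trans (nf_growth j) _; apply: le_trans (ler_wpM2r (ler0n _ _) (ler_norm W)) _.
  exact: ler_wpM2l.
rewrite mulrA mulrAC; nra.
Qed.

End CodeIndex.

Theorem theorem1 (R : realType) (F L : finFieldType) (emb : {rmorphism F -> L})
  (u : nat) (hu : (1 <= u)%N) (hL : #|L| = (#|F| ^ u)%N)
  (nf kf df : nat -> nat) (Gf : forall i, 'M[L]_(kf i, nf i))
  (alpha beta W : R)
  (hfree : forall i, row_free (Gf i))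
  (hdist : forall i, is_min_distance (Gf i) (df i))
  (hninf : forall M : nat, exists N : nat, forall i, (N <= i)%N -> (M <= nf i)%N)
  (hkmono : forall i, (kf i <= kf i.+1)%N)
  (halpha : 0 < alpha < 1) (hbeta : 0 < beta < 1)
  (hrate : (alpha%:E <= limn_einf (fun i => ((kf i)%:R / (nf i)%:R : R)%:E))%E)
  (hrdist : (beta%:E <= limn_einf (fun i => ((df i)%:R / (nf i)%:R : R)%:E))%E)
  (hW : forall i, (nf i.+1)%:R <= W * (nf i)%:R) :
  forall c : R, 0 < c ->
  exists R1 A B p0 : R,
    [/\ 0 < R1, 0 < A, 0 < B, 0 < p0 < 1 &
    forall (n k : nat) (C : 'M[F]_(k, n)) (H : 'M[F]_(n - k, n)),
      (2 <= n)%N -> (k < n)%N -> \rank C = k -> \rank H = (n - k)%N ->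
      (forall x : 'rV[F]_n, (x <= C)%MS <-> H *m x^T == 0) ->
      exists i : nat,
        [/\ (n - k <= kf i)%N, (nf i)%:R <= A * n%:R &
        forall (G : 'M[L]_(kf i, nf i)) (f : 'I_(n - k) -> 'I_(kf i)),
          row_free G -> (G == Gf i)%MS -> injective f ->
          let S := S_of emb (rowsub f G) H in
          let Rn := absz (Num.ceil (R1 * ln n%:R)) in
          [/\ is_test_set emb C S p0,
              (forall (x : 'rV[F]_n) (ch : {ffun 'I_Rn -> 'I_(size S)}),
                 (dc_cost emb u x (chosen ch))%:R <= B * u%:R * n%:R * ln n%:R),
              (storage u S)%:R <= B * u%:R * n%:R ^+ 2,
              (forall x : 'rV[F]_n, (x <= C)%MS ->
                 forall ch : {ffun 'I_Rn -> 'I_(size S)}, dc_run emb x (chosen ch)) &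
              (forall x : 'rV[F]_n, ~~ (x <= C)%MS ->
                 prob_true emb R S Rn x <= n%:R `^ (- c))]]].
Proof.
move=> c c_gt0.
have /andP[alpha_gt0 _] := halpha; have /andP[beta_gt0 beta_lt1] := hbeta.
have [N0 N0_bounds] := code_family_eventually alpha_gt0 beta_gt0 hninf hrate hrdist.
pose p0 := 1 - beta / 2.
have p0_gt0 : 0 < p0 by rewrite /p0; lra.
have p0_lt1 : p0 < 1 by rewrite /p0; lra.
pose R1 := c / - ln p0.
have R1_gt0 : 0 < R1 by rewrite divr_gt0 // oppr_gt0 ln_lt0 // p0_gt0.
pose A := (nf N0)%:R + `|W| / (alpha / 2) + 1.
have A_gt0 : 0 < A by rewrite /A ltr_pwDr // addr_ge0 // divr_ge0 // divr_ge0 // ltW.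
have ln2_gt0 : 0 < ln (2 : R) by apply: ln_gt0; lra.
pose B := A + 3 * (R1 + (ln (2:R))^-1).
have [A_le_B cost_le_B] : A <= B /\ 3 * (R1 + (ln (2:R))^-1) <= B.
  by move: ln2_gt0; rewrite -invr_gt0 /B; lra.
exists R1, A, B, p0; split => //; rewrite ?p0_gt0 //; first lra.
move=> n k C H n_ge2 k_lt_n _ _ C_ker.
have alpha2_gt0 : 0 < alpha / 2 by lra.
have kf_ge i : (N0 <= i)%N -> alpha / 2 * (nf i)%:R <= (kf i)%:R by case/N0_bounds.
have [i [/N0_bounds [nf_gt0 _ df_ge] n_le A_bound]] :=
  code_index alpha2_gt0 hninf kf_ge hW (ltnW n_ge2).
exists i; split=> //; first exact: leq_trans (leq_subr k n) n_le.
move=> G f G_free G_eq f_inj S Rn.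
have G'_sub : (rowsub f G <= Gf i)%MS.
  by case/andP: G_eq => G_sub _; apply: submx_trans (rowsub_sub f G) G_sub.
have S_test : is_test_set emb C S p0.
  have := S_of_test_set emb (row_free_rowsub f_inj G_free) nf_gt0 G'_sub (hdist i) C_ker.
  by apply; rewrite /p0 opprB addrC subrK.
split=> // [x ch|||].
- exact: dc_cost_chosen_ler (ltnW n_ge2) (ceil_mul_ln_le (ltW R1_gt0) n_ge2) cost_le_B.
- by apply/storage_S_of_le/(le_trans A_bound); rewrite ler_wpM2r.
- by move=> x xC ch; apply: dc_run_test_set S_test xC.
- move=> x xNC; apply: le_trans (prob_true_test_set_le _ S_test (ltW p0_gt0) xNC) _.
  have lnn_ge0 : 0 <= ln (n%:R : R) by rewrite ln_ge0 // ler1n ltnW.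
  have n_gt0 : 0 < n%:R :> R by rewrite ltr0n ltnW.
  apply: expr_le_powRN n_gt0 _; first by rewrite p0_gt0.
  by have /andP[] := ceil_ge0_bounds (mulr_ge0 (ltW R1_gt0) lnn_ge0).
Qed.
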